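(* Let $(X,d)$ be a finite metric space and $\mathcal{Y}=(Y_i,d_i)_{i\in I}$ a finite family of metric spaces. If $X$ embeds stochastically into $\mathcal{Y}$ with distortion $D$, then $Wa(X)$ embeds stochastically into the family $(Wa(Y_i))_{i\in I}$ with distortion $D$. More precisely, if the numbers $p_i$ and maps $f_i:X\to Y_i$ realize the stochastic embedding of $X$, then the same $p_i$ and the push-forward maps $(f_i)_*:Wa(X)\to Wa(Y_i)$, $\mu\mapsto (f_i)_*\mu$, realize a stochastic embedding of $Wa(X)$ with distortion $D$.
   Context: For a metric space $(Y,d)$, $P_1(Y)$ is the set of Borel probability measures on $Y$ with finite first moment, and $Wa(Y)$ is $P_1(Y)$ with the Wasserstein distance $Wa(\mu,\nu)=\inf_\pi\int d(x,y)\,d\pi(x,y)$, the infimum over couplings $\pi$ (probability measures on $Y\times Y$ with marginals $\mu,\nu$). A metric space $(X,d)$ embeds stochastically with distortion $D\ge1$ into a finite family $(Y_i,d_i)_{i\in I}$ of metric spaces if there are numbers $p_i\ge0$ with $\sum_i p_i=1$ and maps $f_i:X\to Y_i$ such that each $f_i$ is non-contracting ($d_i(f_i(x),f_i(y))\ge d(x,y)$) and $\sum_i p_i d_i(f_i(x),f_i(y))\le D\,d(x,y)$ for all $x,y\in X$. *)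

From HB Require Import structures.
From mathcomp Require Import all_boot all_order all_algebra.
From mathcomp Require Import boolp classical_sets reals.
Set Implicit Arguments. Unset Strict Implicit. Unset Printing Implicit Defensive.
Import Order.TTheory GRing.Theory Num.Theory.
Local Open Scope ring_scope.
Local Open Scope classical_set_scope.

Section Defs.
Variable R : realType.

Definition is_metric (T : Type) (d : T -> T -> R) : Prop :=
  (forall x y, 0 <= d x y) /\ (forall x y, d x y = 0 <-> x = y) /\
  (forall x y, d x y = d y x) /\ (forall x y z, d x z <= d x y + d y z).

Definition fsprob (T : eqType) (m : T -> R) : Prop :=
  exists s : seq T, [/\ uniq s, (forall x, x \notin s -> m x = 0),
                        (forall x, 0 <= m x) & \sum_(x <- s) m x = 1].

Definition prob (X : finType) (m : X -> R) : Prop :=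
  (forall x, 0 <= m x) /\ \sum_(x : X) m x = 1.

Definition push (X : finType) (V : eqType) (f : X -> V) (mu : X -> R) : V -> R :=
  fun y => \sum_(x : X | f x == y) mu x.

Definition coupling (T : eqType) (s : seq T) (pi : T -> T -> R) (mu nu : T -> R) : Prop :=
  [/\ uniq s, (forall x y, 0 <= pi x y),
      (forall x y, (x \notin s) || (y \notin s) -> pi x y = 0),
      (forall x, \sum_(y <- s) pi x y = mu x) &
      (forall y, \sum_(x <- s) pi x y = nu y)].

Definition Wa (T : eqType) (dT : T -> T -> R) (mu nu : T -> R) : R :=
  inf [set c : R | exists (s : seq T) (pi : T -> T -> R),
         coupling s pi mu nu /\
         c = \sum_(x <- s) \sum_(y <- s) pi x y * dT x y].

(* stochastic embedding with distortion D of (A, dT) into the family (B i, dU i),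
   where A and B i are the subsets of the carrier types forming the spaces *)
Definition stoch_embedding (T : Type) (A : T -> Prop) (I : finType)
  (U : I -> Type) (B : forall i, U i -> Prop)
  (dT : T -> T -> R) (dU : forall i, U i -> U i -> R)
  (p : I -> R) (f : forall i, T -> U i) (D : R) : Prop :=
  [/\ 1 <= D, (forall i, 0 <= p i) & \sum_(i : I) p i = 1] /\
  [/\ (forall i x, A x -> B i (f i x)),
      (forall i x y, A x -> A y -> dT x y <= dU i (f i x) (f i y)) &
      (forall x y, A x -> A y -> \sum_(i : I) p i * dU i (f i x) (f i y) <= D * dT x y)].
End Defs.

From HB Require Import structures.
From mathcomp Require Import all_boot all_order all_algebra.
From mathcomp Require Import boolp classical_sets reals.
From mathcomp Require Import ring.
Import Order.TTheory GRing.Theory Num.Theory.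
Local Open Scope ring_scope.

(** A coupling [pi] of [mu] and [nu] pushes forward along [f_i] to a coupling
  of the push-forwards whose cost is the [pi]-average of [d_i (f_i x) (f_i x')];
  averaging over [i] with weights [p_i] and using the distortion bound on [X]
  gives [sum_i p_i Wa((f_i)_* mu, (f_i)_* nu) <= D Wa(mu, nu)].  Conversely, a
  coupling [pi'] of [f_* mu] and [f_* nu] lifts to a coupling of [mu] and [nu]
  by splitting the mass [pi' y y'] between the fibres of [y] and [y']
  proportionally to [mu] and [nu]; since [f] is non-contracting its [d]-cost
  is at most the cost of [pi'], whence [Wa(mu, nu) <= Wa(f_* mu, f_* nu)]. *)

Section Wasserstein.
Set Implicit Arguments. Unset Strict Implicit.
Variable R : realType.

Lemma big_seq_pred1 (T : eqType) (S : seq T) (a : T) (F : T -> R) :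
  uniq S -> \sum_(y <- S | a == y) F y = if a \in S then F a else 0.
Proof.
elim: S => [|b S IH] /=; first by rewrite big_nil.
case/andP=> bS uS; rewrite big_cons in_cons IH //.
by case: eqP => [->|_] //=; rewrite (negbTE bS) addr0.
Qed.

Lemma sum_fibers (X : finType) (T : eqType) (g : X -> T) (S : seq T) (F : X -> R) :
  uniq S -> \sum_(y <- S) \sum_(x | g x == y) F x = \sum_(x | g x \in S) F x.
Proof.
move=> uS; under eq_bigr do rewrite big_mkcond.
rewrite exchange_big [RHS]big_mkcond; apply: eq_bigr => x _.
by rewrite -big_mkcond big_seq_pred1.
Qed.

Lemma sum_fibers_full (X : finType) (T : eqType) (g : X -> T) (S : seq T) (F : X -> R) :
  uniq S -> (forall x, g x \in S) -> \sum_(y <- S) \sum_(x | g x == y) F x = \sum_x F x.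
Proof. by move=> uS gS; rewrite sum_fibers //; apply: eq_bigl => x; rewrite gS. Qed.

Lemma sum_uniq_supp (X : finType) (s : seq X) (F : X -> R) :
  uniq s -> (forall x, x \notin s -> F x = 0) -> \sum_(x <- s) F x = \sum_x F x.
Proof.
move=> us Fs; rewrite big_uniq // [RHS](bigID (mem s)) /=.
by rewrite [X in _ + X]big1 ?addr0.
Qed.

Section PushForward.
Variables (X : finType) (T : eqType) (g : X -> T).

Lemma mem_undup_codom x : g x \in undup (codom g).
Proof. by rewrite mem_undup codom_f. Qed.

Lemma push_ge0 (w : X -> R) y : (forall x, 0 <= w x) -> 0 <= push g w y.
Proof. by move=> w0; apply: sumr_ge0. Qed.

Lemma sum_push (S : seq T) (h : T -> R) (w : X -> R) :
  uniq S -> (forall y, y \notin S -> h y = 0) ->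
  \sum_(y <- S) h y * push g w y = \sum_x h (g x) * w x.
Proof.
move=> uS hS.
transitivity (\sum_(y <- S) \sum_(x | g x == y) h (g x) * w x).
  by apply: eq_bigr => y _; rewrite /push mulr_sumr; apply: eq_bigr => x /eqP ->.
by rewrite sum_fibers // big_rmcond // => x /hS ->; rewrite mul0r.
Qed.

Lemma fsprob_push (mu : X -> R) : prob mu -> fsprob (push g mu).
Proof.
case=> mu0 mu1; exists (undup (codom g)); split=> [|y|y|].
- exact: undup_uniq.
- by move=> yg; rewrite /push big1 // => x /eqP gx; rewrite -gx mem_undup_codom in yg.
- exact: push_ge0.
- by rewrite /push sum_fibers_full ?undup_uniq //; exact: mem_undup_codom.
Qed.

Lemma push_divK (w : X -> R) x :
  (forall x, 0 <= w x) -> w x / push g w (g x) * push g w (g x) = w x.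
Proof.
move=> w0; have [Wx0|] := eqVneq (push g w (g x)) 0; last by move=> ?; rewrite divfK.
by rewrite (psumr_eq0P (fun x' _ => w0 x') Wx0) ?mul0r.
Qed.

(* On a null fibre the weight is [w x / 0 = 0], harmless because [h] vanishes there. *)
Lemma sum_push_div (S : seq T) (h : T -> R) (w : X -> R) :
  uniq S -> (forall y, y \notin S -> h y = 0) ->
  (forall y, push g w y = 0 -> h y = 0) ->
  \sum_x h (g x) * (w x / push g w (g x)) = \sum_(y <- S) h y.
Proof.
move=> uS hS hW.
transitivity (\sum_(y <- S) h y / push g w y * push g w y); last first.
  apply: eq_bigr => y _; have [/hW ->|] := eqVneq (push g w y) 0; last by move=> ?; rewrite divfK.
  by rewrite !mul0r.
rewrite sum_push // => [|y /hS ->]; last by rewrite mul0r.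
by apply: eq_bigr => x _; rewrite mulrAC mulrA.
Qed.

End PushForward.

Definition cost (T : eqType) (s : seq T) (pi e : T -> T -> R) : R :=
  \sum_(x <- s) \sum_(y <- s) pi x y * e x y.

Section Couplings.
Variables (T : eqType) (e : T -> T -> R) (mu nu : T -> R).

Lemma cost_ge0 s pi :
  (forall x y, 0 <= e x y) -> coupling s pi mu nu -> 0 <= cost s pi e.
Proof.
move=> e0 [_ pi0 _ _ _]; apply: sumr_ge0 => x _; apply: sumr_ge0 => y _.
exact: mulr_ge0.
Qed.

Lemma Wa_le_cost s pi :
  (forall x y, 0 <= e x y) -> coupling s pi mu nu -> Wa e mu nu <= cost s pi e.
Proof.
move=> e0 C; apply: ge_inf; last by exists s, pi.
by exists 0 => _ [s' [pi' [C' ->]]]; exact: cost_ge0 C'.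
Qed.

Lemma le_Wa s0 pi0 a : coupling s0 pi0 mu nu ->
  (forall s pi, coupling s pi mu nu -> a <= cost s pi e) -> a <= Wa e mu nu.
Proof.
move=> C0 le_a; apply: lb_le_inf; first by exists (cost s0 pi0 e), s0, pi0.
by move=> _ [s [pi [C ->]]]; exact: le_a.
Qed.

Lemma coupling_row_eq0 s pi x y : coupling s pi mu nu -> mu x = 0 -> pi x y = 0.
Proof.
case=> _ pi0 off row _; have [ys|yNs] := boolP (y \in s); last by rewrite off ?yNs ?orbT.
by rewrite -row => /eqP; rewrite psumr_eq0 // => /allP/(_ y ys)/eqP.
Qed.

Lemma coupling_col_eq0 s pi x y : coupling s pi mu nu -> nu y = 0 -> pi x y = 0.
Proof.
case=> _ pi0 off _ col; have [xs|xNs] := boolP (x \in s); last by rewrite off ?xNs.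
by rewrite -col => /eqP; rewrite psumr_eq0 // => /allP/(_ x xs)/eqP.
Qed.

End Couplings.

Section FiniteCouplings.
Variables (X : finType) (mu nu : X -> R).

Lemma coupling_row s pi x : coupling s pi mu nu -> \sum_y pi x y = mu x.
Proof.
by case=> us _ off <- _; rewrite [RHS]sum_uniq_supp // => y ys; rewrite off ?ys ?orbT.
Qed.

Lemma coupling_col s pi y : coupling s pi mu nu -> \sum_x pi x y = nu y.
Proof. by case=> us _ off _ <-; rewrite [RHS]sum_uniq_supp // => x xs; rewrite off ?xs. Qed.

Lemma cost_fin s pi (e : X -> X -> R) :
  coupling s pi mu nu -> cost s pi e = \sum_x \sum_y pi x y * e x y.
Proof.
case=> us _ off _ _; rewrite /cost sum_uniq_supp // => [|x xs]; last first.
  by rewrite big1 // => y _; rewrite off ?xs // mul0r.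
apply: eq_bigr => x _; rewrite sum_uniq_supp // => y ys.
by rewrite off ?ys ?orbT // mul0r.
Qed.

Lemma coupling_enum pi : (forall x y, 0 <= pi x y) ->
  (forall x, \sum_y pi x y = mu x) -> (forall y, \sum_x pi x y = nu y) ->
  coupling (enum X) pi mu nu.
Proof.
move=> pi0 row col; split=> // [|x y|x|y]; first exact: enum_uniq.
- by rewrite !mem_enum.
- by rewrite big_enum.
- by rewrite big_enum.
Qed.

Lemma coupling_prod : prob mu -> prob nu -> coupling (enum X) (fun x y => mu x * nu y) mu nu.
Proof.
move=> [mu0 mu1] [nu0 nu1]; apply: coupling_enum => [x y|x|y].
- exact: mulr_ge0.
- by rewrite -mulr_sumr nu1 mulr1.
- by rewrite -mulr_suml mu1 mul1r.
Qed.

End FiniteCouplings.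

Definition push2 (X : finType) (T : eqType) (g : X -> T) (pi : X -> X -> R) : T -> T -> R :=
  fun y y' => \sum_(x | g x == y) \sum_(x' | g x' == y') pi x x'.

Section PushCoupling.
Variables (X : finType) (T : eqType) (g : X -> T).

Lemma coupling_push2 s pi (mu nu : X -> R) : coupling s pi mu nu ->
  coupling (undup (codom g)) (push2 g pi) (push g mu) (push g nu).
Proof.
move=> C; have [_ pi0 _ _ _] := C.
have gS := mem_undup_codom g; have uS := undup_uniq (codom g).
split=> // [y y'|y y'|y|y'].
- by apply: sumr_ge0 => x _; apply: sumr_ge0.
- case/orP=> yNS; rewrite /push2 big1 // => x /eqP gx.
    by rewrite -gx gS in yNS.
  by rewrite big1 // => x' /eqP gx'; rewrite -gx' gS in yNS.
- rewrite exchange_big /push; apply: eq_bigr => x _.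
  by rewrite sum_fibers_full //; exact: coupling_row C.
- rewrite sum_fibers_full // exchange_big /push; apply: eq_bigr => x' _.
  exact: coupling_col C.
Qed.

Lemma cost_push2 pi (e : T -> T -> R) :
  cost (undup (codom g)) (push2 g pi) e = \sum_x \sum_x' pi x x' * e (g x) (g x').
Proof.
have gS := mem_undup_codom g; have uS := undup_uniq (codom g).
rewrite -(sum_fibers_full _ uS gS); apply: eq_bigr => y _.
under [RHS]eq_bigr do rewrite -(sum_fibers_full _ uS gS).
rewrite [RHS]exchange_big; apply: eq_bigr => y' _.
rewrite /push2 mulr_suml; apply: eq_bigr => x /eqP gx.
by rewrite mulr_suml; apply: eq_bigr => x' /eqP gx'; rewrite gx gx'.
Qed.

End PushCoupling.

Section LiftCoupling.
Variables (X : finType) (T : eqType) (g : X -> T) (mu nu : X -> R).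
Hypotheses (mu_ge0 : forall x, 0 <= mu x) (nu_ge0 : forall x, 0 <= nu x).
Variables (s : seq T) (pi : T -> T -> R).
Hypothesis pi_coupling : coupling s pi (push g mu) (push g nu).

Definition lift2 x x' :=
  pi (g x) (g x') * (mu x / push g mu (g x)) * (nu x' / push g nu (g x')).

Lemma lift2_ge0 x x' : 0 <= lift2 x x'.
Proof.
have [_ pi0 _ _ _] := pi_coupling.
by rewrite !mulr_ge0 ?invr_ge0 ?push_ge0.
Qed.

Lemma lift2_row_weighted (t : T -> R) x :
  \sum_x' lift2 x x' * t (g x') = mu x / push g mu (g x) * \sum_(y' <- s) pi (g x) y' * t y'.
Proof.
have [us _ off _ _] := pi_coupling.
transitivity (mu x / push g mu (g x) *
  \sum_x' pi (g x) (g x') * t (g x') * (nu x' / push g nu (g x'))).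
  by rewrite mulr_sumr; apply: eq_bigr => x' _; rewrite /lift2; ring.
congr (_ * _); apply: (sum_push_div (h := fun y' => pi (g x) y' * t y')) => // y'.
  by move=> y'Ns; rewrite off ?y'Ns ?orbT // mul0r.
by move/(coupling_col_eq0 (g x) pi_coupling) => ->; rewrite mul0r.
Qed.

Lemma lift2_col x' : \sum_x lift2 x x' = nu x'.
Proof.
have [us _ off _ col] := pi_coupling.
transitivity (nu x' / push g nu (g x') * \sum_x pi (g x) (g x') * (mu x / push g mu (g x))).
  by rewrite mulr_sumr; apply: eq_bigr => x _; rewrite /lift2; ring.
rewrite (sum_push_div (h := pi^~ (g x')) (S := s)) // => [|y yNs|y].
- by rewrite col push_divK.
- by rewrite off ?yNs.
- exact: coupling_row_eq0 pi_coupling.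
Qed.

Lemma coupling_lift2 : coupling (enum X) lift2 mu nu.
Proof.
have [_ _ _ row _] := pi_coupling.
apply: coupling_enum => [|x|]; [exact: lift2_ge0 | | exact: lift2_col].
have := lift2_row_weighted (fun=> 1) x; under eq_bigr do rewrite mulr1.
by under [in RHS]eq_bigr do rewrite mulr1; rewrite row push_divK.
Qed.

Lemma cost_lift2 (e : T -> T -> R) :
  \sum_x \sum_x' lift2 x x' * e (g x) (g x') = cost s pi e.
Proof.
have [us _ off _ _] := pi_coupling.
under eq_bigr do rewrite lift2_row_weighted mulrC.
apply: sum_push_div => // y; first by move=> yNs; rewrite big1 // => y' _; rewrite off ?yNs // mul0r.
by move=> My; rewrite big1 // => y' _; rewrite (coupling_row_eq0 y' pi_coupling) // mul0r.
Qed.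

End LiftCoupling.

Lemma Wa_le_push (X : finType) (T : eqType) (d : X -> X -> R) (e : T -> T -> R)
  (g : X -> T) (mu nu : X -> R) :
  (forall x x', 0 <= d x x') -> (forall x x', d x x' <= e (g x) (g x')) ->
  prob mu -> prob nu -> Wa d mu nu <= Wa e (push g mu) (push g nu).
Proof.
move=> d0 d_le Pmu Pnu; have [mu0 _] := Pmu; have [nu0 _] := Pnu.
apply: le_Wa (coupling_push2 g (coupling_prod Pmu Pnu)) _ => s pi C.
have Clift := coupling_lift2 mu0 nu0 C.
rewrite -(cost_lift2 C); apply: le_trans (Wa_le_cost d0 Clift) _.
rewrite (cost_fin _ Clift); apply: ler_sum => x _; apply: ler_sum => x' _.
by apply: ler_wpM2l; [exact: (lift2_ge0 mu0 nu0 C) | exact: d_le].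
Qed.

Lemma Wa_push_distortion (X : finType) (d : X -> X -> R) (I : finType) (Y : I -> eqType)
  (e : forall i, Y i -> Y i -> R) (g : forall i, X -> Y i) (p : I -> R) (D : R)
  (mu nu : X -> R) :
  0 < D -> (forall i, 0 <= p i) -> (forall i y y', 0 <= e i y y') ->
  (forall x x', \sum_i p i * e i (g i x) (g i x') <= D * d x x') ->
  prob mu -> prob nu ->
  \sum_i p i * Wa (e i) (push (g i) mu) (push (g i) nu) <= D * Wa d mu nu.
Proof.
move=> D0 p0 e0 distort Pmu Pnu.
rewrite mulrC -ler_pdivrMr //; apply: le_Wa (coupling_prod Pmu Pnu) _ => s pi C.
rewrite ler_pdivrMr // mulrC (cost_fin _ C); have [_ pi0 _ _ _] := C.
apply: (le_trans (y := \sum_i p i * \sum_x \sum_x' pi x x' * e i (g i x) (g i x'))).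
  apply: ler_sum => i _; apply: ler_wpM2l => //.
  by rewrite -cost_push2; exact: Wa_le_cost (coupling_push2 _ C).
have -> : \sum_i p i * \sum_x \sum_x' pi x x' * e i (g i x) (g i x') =
          \sum_x \sum_x' pi x x' * \sum_i p i * e i (g i x) (g i x').
  under eq_bigr do rewrite mulr_sumr; rewrite exchange_big; apply: eq_bigr => x _.
  under eq_bigr do rewrite mulr_sumr; rewrite exchange_big; apply: eq_bigr => x' _.
  by rewrite mulr_sumr; apply: eq_bigr => i _; rewrite mulrCA.
rewrite mulr_sumr; apply: ler_sum => x _; rewrite mulr_sumr; apply: ler_sum => x' _.
by rewrite mulrCA; apply: ler_wpM2l.
Qed.

End Wasserstein.

Theorem lemma2 (R : realType) (X : finType) (d : X -> X -> R)
  (I : finType) (Y : I -> eqType) (dY : forall i, Y i -> Y i -> R)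
  (p : I -> R) (f : forall i, X -> Y i) (D : R) :
  is_metric d -> (forall i, is_metric (dY i)) ->
  stoch_embedding (fun _ : X => True) (fun i (_ : Y i) => True) d dY p f D ->
  stoch_embedding (@prob R X) (fun i => @fsprob R (Y i))
    (Wa d) (fun i => Wa (dY i)) p (fun i => push (f i)) D.
Proof.
move=> [d_ge0 _] dY_metric [[D_ge1 p_ge0 p_sum1] [_ f_noncontr f_distort]].
have dY_ge0 i : forall y y', 0 <= dY i y y' by case: (dY_metric i).
have D_gt0 : 0 < D := lt_le_trans ltr01 D_ge1.
split=> //; split=> [i mu /fsprob_push //|i mu nu Pmu Pnu|mu nu Pmu Pnu].
- by apply: Wa_le_push => // x x'; exact: f_noncontr.
- by apply: Wa_push_distortion => // x x'; exact: f_distort.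
Qed.
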